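(* Let $\mathcal C=\mathcal C(I,A,(\rho_i)_{i\in I},(C^a)_{a\in A})$ be a connected Cartan scheme and $\mathcal R=\mathcal R(\mathcal C,(R^a)_{a\in A})$ a root system of type $\mathcal C$. Let $a\in A$ and $i,j\in I$ with $i\neq j$. If $c^a_{ij}=0$, then $c^a_{jl}=c^{\rho_i(a)}_{jl}$ for all $l\in I$.
   Context: Let $I$ be a nonempty finite set and $\{\alpha_i\mid i\in I\}$ the standard basis of $\mathbb Z^I$; $\mathbb N_0=\{0,1,2,\dots\}$. A generalized Cartan matrix is $C=(c_{ij})_{i,j\in I}\in\mathbb Z^{I\times I}$ with $c_{ii}=2$, $c_{jk}\le0$ for $j\ne k$, and $c_{ij}=0\Rightarrow c_{ji}=0$. A Cartan scheme $\mathcal C=\mathcal C(I,A,(\rho_i)_{i\in I},(C^a)_{a\in A})$ consists of a nonempty set $A$, maps $\rho_i:A\to A$ and generalized Cartan matrices $C^a=(c^a_{jk})_{j,k\in I}$ such that (C1) $\rho_i^2=\mathrm{id}$ and (C2) $c^a_{ij}=c^{\rho_i(a)}_{ij}$ for all $a\in A$, $i,j\in I$. It is connected if the group generated by the $\rho_i$ acts transitively on $A$. For $i\in I$, $a\in A$ let $\sigma_i^a\in\mathrm{Aut}(\mathbb Z^I)$, $\sigma_i^a(\alpha_j)=\alpha_j-c^a_{ij}\alpha_i$. A root system of type $\mathcal C$ is a family $\mathcal R=\mathcal R(\mathcal C,(R^a)_{a\in A})$ of subsets $R^a\subset\mathbb Z^I$ such that, writing $R^a_+=R^a\cap\mathbb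 N_0^I$ and $m^a_{i,j}=|R^a\cap(\mathbb N_0\alpha_i+\mathbb N_0\alpha_j)|$, for all $a\in A$, $i,j\in I$: (R1) $R^a=R^a_+\cup(-R^a_+)$; (R2) $R^a\cap\mathbb Z\alpha_i=\{\alpha_i,-\alpha_i\}$; (R3) $\sigma_i^a(R^a)=R^{\rho_i(a)}$; (R4) if $i\neq j$ and $m^a_{i,j}$ is finite then $(\rho_i\rho_j)^{m^a_{i,j}}(a)=a$. *)

From HB Require Import structures.
From mathcomp Require Import all_boot all_order all_algebra.
Set Implicit Arguments. Unset Strict Implicit. Unset Printing Implicit Defensive.
Import Order.TTheory GRing.Theory Num.Theory.
Local Open Scope ring_scope.

(* Z^I is represented as finite functions I -> int; alpha i is the i-th
   standard basis vector. *)
Definition alpha (I : finType) (i : I) : {ffun I -> int} :=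
  [ffun k => (k == i)%:R].

Definition gen_cartan (I : finType) (c : I -> I -> int) : Prop :=
  (forall i, c i i = 2) /\
  (forall j k, j != k -> c j k <= 0) /\
  (forall i j, c i j = 0 -> c j i = 0).

Definition cartan_scheme (I : finType) (A : Type) (rho : I -> A -> A)
    (C : A -> I -> I -> int) : Prop :=
  (exists a : A, True) /\
  (forall a, gen_cartan (C a)) /\
  (forall i a, rho i (rho i a) = a) /\
  (forall a i j, C a i j = C (rho i a) i j).

(* connected: the group generated by the rho_i acts transitively on A
   (as the rho_i are involutions, this group consists of words in rho_i) *)
Definition connected_scheme (I : finType) (A : Type) (rho : I -> A -> A) : Prop :=
  forall a b : A, exists s : seq I, foldr rho a s = b.

(* sigma_i^a (alpha_j) = alpha_j - c^a_{ij} alpha_i, extended Z-linearly *)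
Definition sigma (I : finType) (A : Type) (C : A -> I -> I -> int)
    (i : I) (a : A) (v : {ffun I -> int}) : {ffun I -> int} :=
  [ffun k => v k - (\sum_(j : I) C a i j * v j) * alpha i k].

Definition nonneg (I : finType) (v : {ffun I -> int}) : Prop :=
  forall k, 0 <= v k.

Definition has_card (T : eqType) (P : T -> Prop) (m : nat) : Prop :=
  exists s : seq T, [/\ uniq s, size s = m & forall x, P x <-> x \in s].

Definition zscale (I : finType) (c : int) (v : {ffun I -> int}) :
  {ffun I -> int} := [ffun k => c * v k].

Definition rank2_part (I : finType) (R : {ffun I -> int} -> Prop) (i j : I)
    (v : {ffun I -> int}) : Prop :=
  R v /\ exists p q : nat, v = [ffun k => (p%:Z) * alpha i k + (q%:Z) * alpha j k].

Definition root_system (I : finType) (A : Type) (rho : I -> A -> A)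
    (C : A -> I -> I -> int) (R : A -> {ffun I -> int} -> Prop) : Prop :=
  (forall a v, R a v <-> ((R a v /\ nonneg v) \/ (R a (zscale (-1) v) /\ nonneg (zscale (-1) v)))) /\
  (forall a i v, (R a v /\ exists k : int, v = zscale k (alpha i)) <->
                 (v = alpha i \/ v = zscale (-1) (alpha i))) /\
  (forall a i v, R (rho i a) v <-> exists w, R a w /\ sigma C i a w = v) /\
  (forall a i j m, i != j -> has_card (rank2_part (R a) i j) m ->
     iter m (fun b => rho i (rho j b)) a = a).

From mathcomp Require Import all_boot all_order all_algebra.
From mathcomp Require Import ring.
Set Implicit Arguments. Unset Strict Implicit.
Import Order.TTheory GRing.Theory Num.Theory.
Local Open Scope ring_scope.

(* Only l different from i and j needs work, and by the symmetry a <-> rho_i a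
   it suffices to show c^{rho_i a}_{jl} <= c^a_{jl}.  Put b = rho_i a and
   c = c^a_{jl}, d = c^a_{il}.  Reflecting the simple root alpha_l of
   R^{rho_j a} successively by sigma_j, sigma_i, sigma_j produces the roots
     alpha_l - c alpha_j                          in R^a,
     alpha_l - c alpha_j - d alpha_i              in R^b      (as c^a_{ij} = 0),
     alpha_l + (c - c^b_{jl}) alpha_j - d alpha_i in R^{rho_j b} (as c^b_{ji} = 0).
   The last root has alpha_l-coefficient 1, so it is positive, whence
   c - c^b_{jl} >= 0. *)

Lemma sum_mul_delta (I : finType) (F : I -> int) (x : I) :
  \sum_(m : I) F m * (m == x)%:R = F x.
Proof.
rewrite (bigD1 x) //= eqxx mulr1 big1 ?addr0 // => m /negbTE ->.
by rewrite mulr0.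
Qed.

Lemma alphaE (I : finType) (i k : I) : alpha i k = (k == i)%:R.
Proof. by rewrite ffunE. Qed.

Lemma sigmaE (I : finType) (A : Type) (C : A -> I -> I -> int) i a v k :
  sigma C i a v k = v k - (\sum_(j : I) C a i j * v j) * (k == i)%:R.
Proof. by rewrite ffunE alphaE. Qed.

Section RootSystem.

Variables (I : finType) (A : Type) (rho : I -> A -> A) (C : A -> I -> I -> int).
Hypothesis schemeC : cartan_scheme rho C.

Lemma rhoK i : involutive (rho i).
Proof. by case: schemeC => _ [_ [/(_ i)]]. Qed.

Lemma cartan_rho a i j : C (rho i a) i j = C a i j.
Proof. by case: schemeC => _ [_ [_ C2]]; rewrite [RHS]C2. Qed.

Lemma cartan_diag a i : C a i i = 2.
Proof. by case: schemeC => _ [/(_ a) []]. Qed.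

Lemma cartan_eq0_sym a i j : C a i j = 0 -> C a j i = 0.
Proof. by case: schemeC => _ [/(_ a) [_ [_ /(_ i j)]]]. Qed.

Variable R : A -> {ffun I -> int} -> Prop.
Hypothesis rootsR : root_system rho C R.

Lemma alpha_root a i : R a (alpha i).
Proof. by case: rootsR => _ [/(_ a i (alpha i)) [_ /(_ (or_introl erefl)) []]]. Qed.

Lemma sigma_root a i v : R a v -> R (rho i a) (sigma C i a v).
Proof. by case: rootsR => _ [_ [/(_ a i) R3 _]] Rv; apply/R3; exists v. Qed.

Lemma root_nonneg a v k : R a v -> 0 < v k -> nonneg v.
Proof.
case: rootsR => /(_ a v) R1 _ Rv vk_gt0.
case: (R1.1 Rv) => [[] // | [_ /(_ k)]].
by rewrite ffunE mulN1r oppr_ge0 leNgt vk_gt0.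
Qed.

Lemma alpha_sub_root a j l :
  R a [ffun k => alpha l k - C a j l * alpha j k].
Proof.
rewrite -[a in R a](rhoK j).
have -> : [ffun k => alpha l k - C a j l * alpha j k] =
          sigma C j (rho j a) (alpha l).
  apply/ffunP => k; rewrite sigmaE ffunE.
  under eq_bigr => m _ do rewrite alphaE.
  by rewrite sum_mul_delta cartan_rho !alphaE mulrC.
exact/sigma_root/alpha_root.
Qed.

Lemma cartan_rho_le a i j l : i != j -> l != i -> l != j -> C a i j = 0 ->
  C (rho i a) j l <= C a j l.
Proof.
move=> ij li lj Caij; set c := C a j l; set d := C a i l; set e := C (rho i a) j l.
set v1 := [ffun k => alpha l k - c * alpha j k].
set v2 := sigma C i a v1; set v3 := sigma C j (rho i a) v2.
have v3_root : R (rho j (rho i a)) v3 by exact/sigma_root/sigma_root/alpha_sub_root.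
have v2E k : v2 k = (k == l)%:R - c * (k == j)%:R - d * (k == i)%:R.
  rewrite /v2 sigmaE; under eq_bigr => m _ do rewrite ffunE !alphaE mulrBr mulrCA.
  by rewrite sumrB -mulr_sumr !sum_mul_delta Caij mulr0 subr0 ffunE !alphaE.
have pairing_v2 : \sum_m C (rho i a) j m * v2 m = e - c * 2.
  under eq_bigr => m _ do rewrite v2E !mulrBr (mulrCA _ c) (mulrCA _ d).
  rewrite !sumrB -!mulr_sumr !sum_mul_delta cartan_diag.
  by rewrite [C _ j i]cartan_eq0_sym ?cartan_rho // mulr0 subr0.
have v3l : v3 l = 1 by rewrite sigmaE v2E eqxx !(negbTE li, negbTE lj) !mulr0 !subr0.
have v3j : v3 j = c - e.
  rewrite sigmaE pairing_v2 v2E eqxx eq_sym (negbTE lj) eq_sym (negbTE ij).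
  by rewrite /= !mulr0 !subr0 mulr1; ring.
have /(_ j) : nonneg v3 by apply: (@root_nonneg _ _ l v3_root); rewrite v3l.
by rewrite v3j subr_ge0.
Qed.

End RootSystem.

Theorem lemma4p5 (I : finType) (A : Type) (rho : I -> A -> A)
    (C : A -> I -> I -> int) (R : A -> {ffun I -> int} -> Prop) :
  cartan_scheme rho C -> connected_scheme rho -> root_system rho C R ->
  forall (a : A) (i j : I), i != j -> C a i j = 0%R ->
  forall l : I, C a j l = C (rho i a) j l.
Proof.
move=> schemeC _ rootsR a i j ij Caij l.
have Cij_rho : C (rho i a) i j = 0 by rewrite (cartan_rho schemeC).
have [-> | li] := eqVneq l i; first by rewrite (cartan_eq0_sym schemeC Caij) (cartan_eq0_sym schemeC Cij_rho).
have [-> | lj] := eqVneq l j; first by rewrite !(cartan_diag schemeC).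
apply/eqP; rewrite eq_le (cartan_rho_le schemeC rootsR ij li lj Caij) andbT.
by have := cartan_rho_le schemeC rootsR ij li lj Cij_rho; rewrite (rhoK schemeC).
Qed.
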